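(* Let $C=U_d\cdots U_1$ be a Clifford circuit of depth $d$ on $n$ qubits and $\tilde{\mathcal C}=\mathcal E^{\otimes n}\circ\mathcal U_d\circ\mathcal E^{\otimes n}\circ\cdots\circ\mathcal U_1\circ\mathcal E^{\otimes n}$ its noisy implementation, with $\mathcal U_t(\cdot)=U_t(\cdot)U_t^\dagger$ and $\mathcal E(\sigma)=(1-\gamma)\sigma+\gamma\frac I2\operatorname{Tr}(\sigma)$. For $y\in\{0,1\}^n$ let $p_{\tilde{\mathcal C},y}(x)=\operatorname{Tr}(F_x\tilde{\mathcal C}(\lvert y\rangle\langle y\rvert))$, where $F_x=U^\dagger\lvert x\rangle\langle x\rvert U$ for an arbitrary fixed measurement basis given by a unitary $U$. Then when $d\ge O(\gamma^{-1}\log n)$, $$\mathbb E_{y\sim\{0,1\}^n}\sum_{x\in\{0,1\}^n}p_{\tilde{\mathcal C},y}(x)^2=\frac{O(1)}{2^n},$$ where $y$ is uniformly distributed.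
   Context: The Clifford group consists of unitaries mapping Pauli operators to Pauli operators under conjugation. *)

From HB Require Import structures.
From mathcomp Require Import all_boot all_order all_algebra.
From mathcomp Require Import complex.
From mathcomp Require Import reals exp.
Set Implicit Arguments. Unset Strict Implicit. Unset Printing Implicit Defensive.
Import Order.TTheory GRing.Theory Num.Theory.
Local Open Scope ring_scope.

Section Qubits.
Variable R : realType.
Local Notation C := (complex R).

Definition rC (x : R) : C := Complex x 0.
Definition imC : C := Complex 0 1.

(* n-qubit operators: matrices indexed by computational basis states
   'I_(2^n); the k-th qubit of basis state a is bit k of a. *)
Definition qbit (k : nat) (N : nat) (a : 'I_N) : bool := odd (a %/ 2 ^ k).

Definition adj (N : nat) (A : 'M[C]_N) : 'M[C]_N := (map_mx Num.conj A)^T.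

Definition unitary (N : nat) (A : 'M[C]_N) : Prop := A *m adj A = 1%:M.

(* single-qubit Pauli matrices: 0 = I, 1 = X, 2 = Y, 3 = Z *)
Definition pauli1 (s : 'I_4) (a b : bool) : C :=
  match val s with
  | 0 => if a == b then 1 else 0
  | 1 => if a != b then 1 else 0
  | 2 => if a == b then 0 else (if a then imC else - imC)
  | _ => if a == b then (if a then -1 else 1) else 0
  end.

(* n-qubit Pauli string s_0 (x) s_1 (x) ... (x) s_{n-1} (tensor product) *)
Definition pauli (n : nat) (s : 'I_n -> 'I_4) : 'M[C]_(2 ^ n) :=
  \matrix_(a, b) \prod_(k < n) pauli1 (s k) (qbit k a) (qbit k b).

Definition clifford (n : nat) (U : 'M[C]_(2 ^ n)) : Prop :=
  unitary U /\
  forall s : 'I_n -> 'I_4, exists (s' : 'I_n -> 'I_4) (w : C),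
    w ^+ 4 = 1 /\ U *m pauli s *m adj U = w *: pauli s'.

(* single-qubit depolarizing channel E(sig) = (1-g) sig + g I/2 Tr sig,
   written as its superoperator kernel: E(sig)(a',b') = sum_{a,b} K a' b' a b sig(a,b) *)
Definition depol_kernel (g : R) (a' b' a b : bool) : C :=
  rC (1 - g) * (if (a' == a) && (b' == b) then 1 else 0)
  + rC (g / 2) * (if (a' == b') && (a == b) then 1 else 0).

(* n-fold tensor product E^{(x) n} of the single-qubit channel *)
Definition depol_n (n : nat) (g : R) (rho : 'M[C]_(2 ^ n)) : 'M[C]_(2 ^ n) :=
  \matrix_(a', b') \sum_(a < 2 ^ n) \sum_(b < 2 ^ n)
     (\prod_(k < n) depol_kernel g (qbit k a') (qbit k b') (qbit k a) (qbit k b))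
     * rho a b.

Definition uconj (N : nat) (U rho : 'M[C]_N) : 'M[C]_N := U *m rho *m adj U.

(* noisy circuit E o U_t o E o ... o U_1 o E applied to rho, for t layers;
   the gates are Us 1, ..., Us d. *)
Fixpoint noisy (n : nat) (g : R) (Us : nat -> 'M[C]_(2 ^ n)) (t : nat)
  (rho : 'M[C]_(2 ^ n)) : 'M[C]_(2 ^ n) :=
  match t with
  | 0 => depol_n g rho
  | t'.+1 => depol_n g (uconj (Us t'.+1) (noisy g Us t' rho))
  end.

Definition ket_bra (N : nat) (y : 'I_N) : 'M[C]_N := delta_mx y y.

Definition outprob (n : nat) (g : R) (Us : nat -> 'M[C]_(2 ^ n)) (d : nat)
  (U : 'M[C]_(2 ^ n)) (y x : 'I_(2 ^ n)) : C :=
  \tr (adj U *m ket_bra x *m U *m noisy g Us d (ket_bra y)).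

Definition avg_collision (n : nat) (g : R) (Us : nat -> 'M[C]_(2 ^ n)) (d : nat)
  (U : 'M[C]_(2 ^ n)) : C :=
  (2 ^ n)%:R^-1 * \sum_(y < 2 ^ n) \sum_(x < 2 ^ n) outprob g Us d U y x ^+ 2.

End Qubits.

From mathcomp Require Import all_boot all_order all_algebra.
From mathcomp Require Import complex.
From mathcomp Require Import reals exp sequences boolp.
From mathcomp Require Import ring lra zify.
Set Implicit Arguments. Unset Strict Implicit. Unset Printing Implicit Defensive.
Import Order.TTheory GRing.Theory Num.Theory.
Local Open Scope ring_scope.

(* Expand states in the Pauli basis, [pauli_coef s A = Tr (P_s^dagger A)].  The
   depolarizing channel multiplies the coefficient of [P_s] by [(1-g)^|s|], |s| the
   number of non-identity factors of s, and a Clifford layer permutes Pauli strings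
   up to phases.  Hence after d layers the coefficient reached from s along its
   trajectory [s_0 = s, s_1, ..., s_d] has been damped by [prod_j (1-g)^|s_j|], while
   all coefficients of |y><y| have modulus at most 1.  By Parseval,
   [2^n * sum_x p(x)^2 <= sum_s |coef_s|^2 <= sum_s prod_j x^|s_j|] with [x = (1-g)^2],
   and AM-GM bounds the product by the mean of the [x^((d+1)|s_j|)]; since each
   [s |-> s_j] is a bijection, every such sum equals [(1 + 3 x^(d+1))^n].  For
   [d >= ln n / g] we get [x^(d+1) <= 1/n], and [(1 + 3/n)^n <= e^3].  The bound
   holds for every input y. *)

Lemma eq_from_bits (n a b : nat) : (a < 2 ^ n)%N -> (b < 2 ^ n)%N ->
  (forall k, (k < n)%N -> odd (a %/ 2 ^ k) = odd (b %/ 2 ^ k)) -> a = b.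
Proof.
elim: n a b => [|n IH] a b; first by rewrite expn0 !ltnS !leqn0 => /eqP -> /eqP ->.
move=> ha hb Hab.
have low : odd a = odd b by have := Hab 0%N isT; rewrite expn0 !divn1.
have high : (a %/ 2 = b %/ 2)%N.
  apply: IH; try by rewrite ltn_divLR // -expnSr.
  by move=> k hk; have := Hab k.+1 hk; rewrite expnS !divnMA.
by rewrite (divn_eq a 2) (divn_eq b 2) high !modn2 low.
Qed.

Lemma prod_eq_ffun (I : finType) (V : eqType) (T : comPzSemiRingType)
    (f g : {ffun I -> V}) :
  \prod_i (f i == g i)%:R = (f == g)%:R :> T.
Proof.
have [->|neq_fg] := eqVneq f g; first by rewrite big1 // => i _; rewrite eqxx.
have [i neq_i] : exists i, f i != g i.
  apply/existsP; move: neq_fg; apply: contraNT; rewrite negb_exists => /forallP eq_i.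
  by apply/eqP/ffunP => i; apply/eqP; rewrite -[_ == _]negbK.
by rewrite (bigD1 i) //= (negbTE neq_i) mul0r.
Qed.

Section QubitBits.
Variable n : nat.

Definition bits (a : 'I_(2 ^ n)) : {ffun 'I_n -> bool} := [ffun k : 'I_n => qbit k a].

Lemma bits_inj : injective bits.
Proof.
move=> a b eq_ab; apply/val_inj/(@eq_from_bits n); rewrite ?ltn_ord // => k hk.
by move/ffunP/(_ (Ordinal hk)): eq_ab; rewrite !ffunE.
Qed.

Lemma bits_bij : bijective bits.
Proof. by apply: (inj_card_bij bits_inj); rewrite card_ffun card_bool !card_ord. Qed.

Lemma sum_prod_qbit (T : comPzSemiRingType) (f : 'I_n -> bool -> T) :
  \sum_(a < 2 ^ n) \prod_(k < n) f k (qbit k a) = \prod_(k < n) \sum_(b : bool) f k b.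
Proof.
have [unbits bitsK unbitsK] := bits_bij.
rewrite (reindex unbits) /=; last by exists bits => v _.
have qbitE v (k : 'I_n) : qbit k (unbits v) = v k by rewrite -{2}(unbitsK v) ffunE.
under eq_bigr => v _ do under eq_bigr => k _ do rewrite qbitE.
by rewrite -bigA_distr_bigA.
Qed.

Lemma prod_eq_qbit (T : comPzSemiRingType) (a b : 'I_(2 ^ n)) :
  \prod_(k < n) (qbit k a == qbit k b)%:R = (a == b)%:R :> T.
Proof.
by rewrite -(inj_eq bits_inj) -prod_eq_ffun; apply: eq_bigr => k _; rewrite !ffunE.
Qed.

End QubitBits.

Lemma prod_le_mean_exprn (R : realFieldType) (m : nat) (a : 'I_m.+1 -> R) :
  (forall j, 0 <= a j) -> \prod_j a j <= m.+1%:R^-1 * \sum_j a j ^+ m.+1.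
Proof.
move=> a_ge0.
have := (@leif_AGM R _ predT (fun j => a j ^+ m.+1) (fun j _ => exprn_ge0 m.+1 (a_ge0 j))).1.
have -> : #|(predT : {pred 'I_m.+1})| = m.+1 by rewrite card_ord.
rewrite prodrXl => AGM.
rewrite mulrC -(ler_pXn2r (ltn0Sn m)) ?nnegrE ?prodr_ge0 //.
by rewrite mulr_ge0 ?invr_ge0 // sumr_ge0 // => j _; apply: exprn_ge0.
Qed.

Section PowWeight.
Variables (R : realType) (n : nat).
Local Notation S := {ffun 'I_n -> 'I_4}.

Definition pow_weight (x : R) (s : S) : R := \prod_(k < n) (if s k == ord0 then 1 else x).

Lemma pow_weight_ge0 (x : R) s : 0 <= x -> 0 <= pow_weight x s.
Proof. by move=> x_ge0; apply: prodr_ge0 => k _; case: ifP. Qed.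

Lemma pow_weightX (x : R) s m : pow_weight x s ^+ m = pow_weight (x ^+ m) s.
Proof. by rewrite -prodrXl; apply: eq_bigr => k _; case: ifP; rewrite ?expr1n. Qed.

Lemma sum_pow_weight (x : R) : \sum_(s : S) pow_weight x s = (1 + x *+ 3) ^+ n.
Proof.
rewrite -(bigA_distr_bigA (fun (k : 'I_n) (j : 'I_4) => if j == ord0 then 1 else x)) /=.
by rewrite prodr_const card_ord !big_ord_recr big_ord0 /= add0r -!addrA.
Qed.

Lemma sum_prod_pow_weight_le (x : R) (d : nat) (sig : nat -> S -> S) : 0 <= x ->
  (forall j, (j <= d)%N -> injective (sig j)) ->
  \sum_(s : S) \prod_(j < d.+1) pow_weight x (sig j s) <= (1 + x ^+ d.+1 *+ 3) ^+ n.
Proof.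
move=> x_ge0 inj_sig.
apply: le_trans (_ : \sum_s d.+1%:R^-1 * \sum_(j < d.+1) pow_weight x (sig j s) ^+ d.+1 <= _).
  by apply: ler_sum => s _; apply: prod_le_mean_exprn => j; apply: pow_weight_ge0.
rewrite -mulr_sumr exchange_big /=.
have sum_sig (j : 'I_d.+1) :
    \sum_(s : S) pow_weight x (sig j s) ^+ d.+1 = (1 + x ^+ d.+1 *+ 3) ^+ n.
  rewrite -sum_pow_weight [RHS](reindex_inj (inj_sig j (ltn_ord j))) /=.
  by apply: eq_bigr => s _; rewrite pow_weightX.
under eq_bigr => j _ do rewrite sum_sig.
by rewrite sumr_const card_ord -[X in _ * X]mulr_natl mulKf ?pnatr_eq0.
Qed.

End PowWeight.

Lemma decay_le_invn (R : realType) (n : nat) (g : R) (d : nat) :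
  (0 < n)%N -> 0 < g -> g <= 1 -> ln n%:R / g <= d%:R ->
  ((1 - g) ^+ 2) ^+ d.+1 <= n%:R^-1.
Proof.
move=> n_gt0 g_gt0 g_le1 hd.
have n_pos : (0 : R) < n%:R by rewrite ltr0n.
apply: le_trans (_ : (1 - g) ^+ d <= _).
  by rewrite -exprM; apply: ler_wiXn2l; [lra | lra | lia].
apply: le_trans (_ : expR (- g) ^+ d <= _).
  by apply: lerXn2r; rewrite ?nnegrE ?expR_ge0 //; [lra | have := expR_ge1Dx (- g); lra].
rewrite -expRM_natr -(lnK (x := n%:R)) ?posrE // -expRN ler_expR.
by rewrite ler_pdivrMr // in hd; lra.
Qed.

Lemma exprn_1D3x_le_expR3 (R : realType) (n : nat) (x : R) :
  0 <= x -> x <= n%:R^-1 -> (1 + x *+ 3) ^+ n <= expR 3.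
Proof.
case: n => [|n] x_ge0 x_le; first by rewrite expr0; have := expR_ge1Dx (3 : R); lra.
apply: le_trans (_ : expR (x *+ 3) ^+ n.+1 <= _).
  by apply: lerXn2r; rewrite ?nnegrE ?expR_ge0 ?expR_ge1Dx // addr_ge0 // mulrn_wge0.
have x_n : x * n.+1%:R <= 1 by rewrite -ler_pdivlMr ?ltr0n // mul1r.
by rewrite -expRM_natr ler_expR mulrnAl; lra.
Qed.

Section SingleQubit.
Variable R : realType.
Local Notation C := (complex R).
Local Notation p1 := (pauli1 R).

Lemma rCE (x : R) : rC x = real_complex R x.
Proof. by []. Qed.

Lemma conj_rC (x : R) : Num.conj (rC x) = rC x.
Proof. by apply/eqP; rewrite eq_complex /= oppr0 !eqxx. Qed.

Lemma imC_sqr : imC R * imC R = -1.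
Proof. by apply/eqP; rewrite eq_complex /= !mul0r mulr0 mulr1 sub0r add0r oppr0 !eqxx. Qed.

Lemma conj_imC : Num.conj (imC R) = - imC R.
Proof. by apply/eqP; rewrite eq_complex /= oppr0 !eqxx. Qed.

Lemma ord4_cases (P : 'I_4 -> Prop) : P (@Ordinal 4 0 isT) -> P (@Ordinal 4 1 isT) ->
  P (@Ordinal 4 2 isT) -> P (@Ordinal 4 3 isT) -> forall s, P s.
Proof.
by move=> P0 P1 P2 P3 [[|[|[|[|m]]]] hm] //; [move: P0|move: P1|move: P2|move: P3];
  congr P; apply: val_inj.
Qed.

Local Ltac pauli1_simp := rewrite /pauli1 /= ?big_bool /= ?conj_imC ?rmorphN
  ?rmorph0 ?rmorph1 ?opprK ?mulr0 ?mul0r ?mulr1 ?mul1r ?mulrN ?mulNr ?imC_sqr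
  ?opprK ?addr0 ?add0r ?oppr0 ?subrr ?addNr.

Lemma pauli1_complete a b a' b' :
  \sum_(s < 4) Num.conj (p1 s a b) * p1 s a' b' = 2 * (a == a')%:R * (b == b')%:R.
Proof.
rewrite !big_ord_recr big_ord0 /=.
by case: a; case: b; case: a'; case: b'; do 3 pauli1_simp.
Qed.

Lemma pauli1_orthogonal (s t : 'I_4) :
  \sum_(b : bool) \sum_(a : bool) Num.conj (p1 s a b) * p1 t a b = 2 * (s == t)%:R.
Proof. by elim/ord4_cases: s; elim/ord4_cases: t; do 3 pauli1_simp. Qed.

Lemma pauli1_depol (g : R) (s : 'I_4) a0 b0 :
  \sum_(b : bool) \sum_(a : bool) Num.conj (p1 s a b) * depol_kernel g a b a0 b0 =
  rC (if s == ord0 then 1 else 1 - g) * Num.conj (p1 s a0 b0).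
Proof.
have two_neq0 : (2 : C) != 0 by rewrite pnatr_eq0.
rewrite /depol_kernel !rCE (fun_if (real_complex R)) !rmorphB !rmorph1 fmorph_div rmorph_nat.
by elim/ord4_cases: s; case: a0; case: b0; do 3 pauli1_simp; field.
Qed.

Lemma norm_pauli1_diag_le1 (s : 'I_4) a : `|p1 s a a| <= 1.
Proof.
by elim/ord4_cases: s; case: a; rewrite /pauli1 /= ?normr0 ?normrN ?normr1 ?ler01.
Qed.

End SingleQubit.

Section Adjoint.
Variable R : realType.
Local Notation C := (complex R).
Variable m : nat.
Implicit Types A B U : 'M[C]_m.

Lemma adjE A i j : adj A i j = Num.conj (A j i).
Proof. by rewrite !mxE. Qed.

Lemma adj_mul A B : adj (A *m B) = adj B *m adj A.
Proof.
apply/matrixP => i j; rewrite !mxE rmorph_sum; apply: eq_bigr => k _.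
by rewrite !mxE rmorphM mulrC.
Qed.

Lemma adjK : involutive (@adj R m).
Proof. by move=> A; apply/matrixP => i j; rewrite !mxE conjCK. Qed.

Lemma adj_scale (c : C) A : adj (c *: A) = Num.conj c *: adj A.
Proof. by apply/matrixP => i j; rewrite !mxE rmorphM. Qed.

Lemma unitaryV U : unitary U -> adj U *m U = 1%:M.
Proof. exact: mulmx1C. Qed.

Lemma mxtrace_adj_mul A B : \tr (adj A *m B) = \sum_i \sum_j Num.conj (A j i) * B j i.
Proof. by apply: eq_bigr => i _; rewrite mxE; apply: eq_bigr => j _; rewrite adjE. Qed.

Lemma mxtrace_uconj U A : unitary U -> \tr (uconj U A) = \tr A.
Proof. by move=> hU; rewrite /uconj mxtrace_mulC mulmxA unitaryV // mul1mx. Qed.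

Lemma uconj_mul U A B : unitary U -> uconj U A *m uconj U B = uconj U (A *m B).
Proof.
by move=> hU; rewrite /uconj !mulmxA -(mulmxA _ (adj U)) unitaryV // mulmx1.
Qed.

Lemma uconj_adj U A : adj (uconj U A) = uconj U (adj A).
Proof. by rewrite /uconj !adj_mul adjK mulmxA. Qed.

End Adjoint.

Section PauliBasis.
Variables (R : realType) (n : nat).
Local Notation C := (complex R).
Local Notation p1 := (pauli1 R).
Local Notation N := (2 ^ n)%N.
Local Notation S := {ffun 'I_n -> 'I_4}.
Local Notation P s := (pauli R (fun k => s k)).

Definition pauli_coef (s : S) (A : 'M[C]_N) : C := \tr (adj (P s) *m A).

Lemma pauliE (s : S) a b : P s a b = \prod_(k < n) p1 (s k) (qbit k a) (qbit k b).
Proof. by rewrite mxE. Qed.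

Lemma conj_pauliE (s : S) a b :
  Num.conj (P s a b) = \prod_(k < n) Num.conj (p1 (s k) (qbit k a) (qbit k b)).
Proof. by rewrite pauliE rmorph_prod. Qed.

Lemma dim_neq0 : (N%:R : C) != 0.
Proof. by rewrite pnatr_eq0 -lt0n expn_gt0. Qed.

Lemma pauli_orthogonal (s t : S) : \tr (adj (P s) *m P t) = N%:R * (s == t)%:R.
Proof.
rewrite mxtrace_adj_mul.
under eq_bigr => i _ do under eq_bigr => j _ do rewrite conj_pauliE pauliE -big_split.
under eq_bigr => i _ do rewrite (sum_prod_qbit (fun k a =>
  Num.conj (p1 (s k) a (qbit k i)) * p1 (t k) a (qbit k i))).
rewrite (sum_prod_qbit (fun k b => \sum_(a : bool)
  Num.conj (p1 (s k) a b) * p1 (t k) a b)).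
under eq_bigr => k _ do rewrite pauli1_orthogonal.
by rewrite big_split prodr_const card_ord natrX prod_eq_ffun.
Qed.

Lemma pauli_complete (i j k l : 'I_N) :
  \sum_(s : S) Num.conj (P s i j) * P s k l = N%:R * ((i == k) && (j == l))%:R.
Proof.
under eq_bigr => s _ do rewrite conj_pauliE pauliE -big_split.
rewrite -(bigA_distr_bigA (fun (m : 'I_n) (x : 'I_4) =>
  Num.conj (p1 x (qbit m i) (qbit m j)) * p1 x (qbit m k) (qbit m l))) /=.
under eq_bigr => m _ do rewrite pauli1_complete.
by rewrite !big_split /= prodr_const card_ord natrX !prod_eq_qbit -mulrA -natrM mulnb.
Qed.

Lemma mxtrace_mul_adj (A : 'M[C]_N) : \tr (A *m adj A) = \sum_i \sum_j `|A i j| ^+ 2.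
Proof. by apply: eq_bigr => i _; rewrite mxE; apply: eq_bigr => j _; rewrite adjE normCK. Qed.

Lemma pauli_parseval (A : 'M[C]_N) :
  \sum_(s : S) `|pauli_coef s A| ^+ 2 = N%:R * \tr (A *m adj A).
Proof.
pose M := ('I_N * 'I_N)%type.
have coefE s : pauli_coef s A = \sum_(p : M) Num.conj (P s p.1 p.2) * A p.1 p.2.
  by rewrite /pauli_coef mxtrace_adj_mul exchange_big pair_big.
have trE : \tr (A *m adj A) = \sum_(p : M) A p.1 p.2 * Num.conj (A p.1 p.2).
  by rewrite mxtrace_mul_adj pair_big; apply: eq_bigr => p _; rewrite normCK.
transitivity (\sum_(p : M) \sum_(q : M) A p.1 p.2 * Num.conj (A q.1 q.2) *
    \sum_(s : S) Num.conj (P s p.1 p.2) * P s q.1 q.2).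
  under eq_bigr => s _ do rewrite normCK coefE rmorph_sum big_distrl /=.
  under eq_bigr => s _ do under eq_bigr => p _ do rewrite big_distrr /=.
  rewrite exchange_big; apply: eq_bigr => p _; rewrite exchange_big.
  apply: eq_bigr => q _; rewrite big_distrr; apply: eq_bigr => s _ /=.
  by rewrite rmorphM /= conjCK; ring.
rewrite trE big_distrr; apply: eq_bigr => p _.
under eq_bigr => q _ do rewrite pauli_complete.
rewrite (bigD1 p) //= big1 => [|q neq_qp].
  by rewrite -[_ && _]/(p == p) eqxx addr0 mulr1 mulrC.
by rewrite -[_ && _]/(p == q) eq_sym (negbTE neq_qp) !mulr0.
Qed.

Lemma adj_depol_pauli (g : R) (s : S) (a b : 'I_N) :
  \sum_i \sum_j Num.conj (P s j i) *
     \prod_(k < n) depol_kernel g (qbit k j) (qbit k i) (qbit k a) (qbit k b)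
  = rC (pow_weight (1 - g) s) * Num.conj (P s a b).
Proof.
under eq_bigr => i _ do under eq_bigr => j _ do rewrite conj_pauliE -big_split.
under eq_bigr => i _ do rewrite (sum_prod_qbit (fun k x =>
  Num.conj (p1 (s k) x (qbit k i)) * depol_kernel g x (qbit k i) (qbit k a) (qbit k b))).
rewrite (sum_prod_qbit (fun k y => \sum_(x : bool)
  Num.conj (p1 (s k) x y) * depol_kernel g x y (qbit k a) (qbit k b))).
under eq_bigr => k _ do rewrite pauli1_depol.
by rewrite big_split /= conj_pauliE /pow_weight rCE rmorph_prod.
Qed.

Lemma depol_nE (g : R) (A : 'M[C]_N) i j :
  depol_n g A i j = \sum_(a < N) \sum_(b < N)
     (\prod_(k < n) depol_kernel g (qbit k i) (qbit k j) (qbit k a) (qbit k b)) * A a b.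
Proof. by rewrite mxE. Qed.

Lemma pauli_coef_depol (g : R) (s : S) (A : 'M[C]_N) :
  pauli_coef s (depol_n g A) = rC (pow_weight (1 - g) s) * pauli_coef s A.
Proof.
rewrite /pauli_coef !mxtrace_adj_mul.
under eq_bigr => i _ do under eq_bigr => j _ do rewrite depol_nE big_distrr /=.
under eq_bigr => i _ do under eq_bigr => j _ do under eq_bigr => a _ do rewrite big_distrr /=.
under eq_bigr => i _ do rewrite exchange_big /=.
rewrite exchange_big /=.
under eq_bigr => a _ do under eq_bigr => i _ do rewrite exchange_big /=.
under eq_bigr => a _ do rewrite exchange_big /=.
rewrite [RHS]big_distrr exchange_big /=; apply: eq_bigr => a _.
rewrite big_distrr /=; apply: eq_bigr => b _.
rewrite [RHS]mulrA -adj_depol_pauli big_distrl /=; apply: eq_bigr => i _.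
by rewrite big_distrl /=; apply: eq_bigr => j _; rewrite mulrA.
Qed.

Lemma norm_pauli_coef_uconj (U : 'M[C]_N) (s t : S) (w : C) (A : 'M[C]_N) :
  unitary U -> w ^+ 4 = 1 -> U *m P s *m adj U = w *: P t ->
  `|pauli_coef t (uconj U A)| = `|pauli_coef s A|.
Proof.
move=> hU w4 hP.
have norm_w : `|w| = 1.
  by apply/eqP; rewrite -(@pexpr_eq1 _ _ 4) // -normrX w4 normr1.
have adj_Pt : adj (P t) = (Num.conj w)^-1 *: (U *m adj (P s) *m adj U).
  have := congr1 (@adj R N) hP; rewrite adj_scale !adj_mul adjK mulmxA => ->.
  by rewrite scalerA mulVf ?scale1r // -normr_eq0 norm_conjC norm_w oner_neq0.
have -> : pauli_coef t (uconj U A) = (Num.conj w)^-1 * pauli_coef s A.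
  rewrite /pauli_coef adj_Pt -scalemxAl mxtraceZ /uconj; congr (_ * _).
  rewrite !mulmxA -(mulmxA (U *m _)) unitaryV // mulmx1.
  by rewrite mxtrace_mulC !mulmxA unitaryV // mul1mx.
by rewrite normrM normfV norm_conjC norm_w invr1 mul1r.
Qed.

Lemma clifford_pauli_perm (U : 'M[C]_N) : clifford U ->
  exists ph : S -> S, injective ph /\
    forall s A, `|pauli_coef (ph s) (uconj U A)| = `|pauli_coef s A|.
Proof.
case=> hU hC.
have image_pauli (s : S) : exists tw : (S * C)%type,
    tw.2 ^+ 4 = 1 /\ U *m P s *m adj U = tw.2 *: P tw.1.
  have [s' [w [w4 hs']]] := hC (fun k => s k).
  exists ([ffun k => s' k], w); split => //=; rewrite hs'; congr (_ *: _).
  by congr pauli; apply: funext => k; rewrite ffunE.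
have [ph_w hph_w] := boolp.choice image_pauli.
have norm_ph (s : S) A : `|pauli_coef (ph_w s).1 (uconj U A)| = `|pauli_coef s A|.
  by have [w4 hs] := hph_w s; apply: norm_pauli_coef_uconj hU w4 hs.
exists (fun s => (ph_w s).1); split => // s1 s2 eq_ph.
have := norm_ph s2 (P s1); rewrite -eq_ph norm_ph /pauli_coef !pauli_orthogonal.
rewrite eqxx mulr1 eq_sym; case: eqP => // _ /eqP.
by rewrite mulr0 normr0 normr_eq0 (negbTE dim_neq0).
Qed.

Lemma conj_depol_kernel (g : R) a b c d :
  Num.conj (depol_kernel g a b c d) = depol_kernel g b a d c.
Proof.
rewrite /depol_kernel rmorphD !rmorphM /= !conj_rC.
by rewrite andbC [b == a]eq_sym [d == c]eq_sym; do 2 case: ifP; rewrite ?rmorph0 ?rmorph1.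
Qed.

Lemma depol_n_adj (g : R) (A : 'M[C]_N) : adj (depol_n g A) = depol_n g (adj A).
Proof.
apply/matrixP => i j; rewrite adjE !depol_nE rmorph_sum exchange_big /=.
apply: eq_bigr => a _; rewrite rmorph_sum; apply: eq_bigr => b _.
rewrite rmorphM rmorph_prod adjE /=; congr (_ * _).
by apply: eq_bigr => k _; rewrite conj_depol_kernel.
Qed.

Lemma ket_bra_adj (y : 'I_N) : adj (ket_bra R y) = ket_bra R y.
Proof. by apply/matrixP => i j; rewrite !mxE conjC_nat andbC. Qed.

Lemma noisy_adj (g : R) Us t (A : 'M[C]_N) :
  adj (noisy g Us t A) = noisy g Us t (adj A).
Proof. by elim: t => [|t IH] /=; rewrite depol_n_adj ?uconj_adj ?IH. Qed.

Lemma mxtrace_ket_bra_mul (x : 'I_N) (B : 'M[C]_N) : \tr (ket_bra R x *m B) = B x x.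
Proof.
rewrite /mxtrace (bigD1 x) //= big1 ?addr0 => [|i /negbTE neq_ix].
  rewrite mxE (bigD1 x) //= big1 ?addr0 => [|j /negbTE neq_jx].
    by rewrite mxE !eqxx mul1r.
  by rewrite mxE neq_jx andbF mul0r.
by rewrite mxE big1 // => j _; rewrite mxE neq_ix mul0r.
Qed.

Lemma outprobE (g : R) Us d (U : 'M[C]_N) (y x : 'I_N) :
  outprob g Us d U y x = uconj U (noisy g Us d (ket_bra R y)) x x.
Proof. by rewrite /outprob /uconj -mxtrace_ket_bra_mul -!mulmxA mxtrace_mulC !mulmxA. Qed.

Lemma sum_sqr_diag_uconj_le (U A : 'M[C]_N) : unitary U -> adj A = A ->
  \sum_x uconj U A x x ^+ 2 <= N%:R^-1 * \sum_(s : S) `|pauli_coef s A| ^+ 2.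
Proof.
move=> hU hA; set B := uconj U A.
have trB : \tr (B *m adj B) = \tr (A *m adj A).
  by rewrite /B uconj_adj uconj_mul // mxtrace_uconj.
rewrite pauli_parseval mulKf ?dim_neq0 // -trB mxtrace_mul_adj.
apply: ler_sum => x _; rewrite (bigD1 x) //= -[B x x ^+ 2]addr0.
apply: lerD; last by apply: sumr_ge0 => j _; apply: exprn_ge0.
have realBxx : Num.conj (B x x) = B x x by rewrite -adjE /B uconj_adj hA.
by rewrite normCK realBxx expr2.
Qed.

End PauliBasis.

Section NoisyCircuit.
Variables (R : realType) (n : nat).
Local Notation C := (complex R).
Local Notation N := (2 ^ n)%N.
Local Notation S := {ffun 'I_n -> 'I_4}.

Lemma norm_pauli_coef_ket_bra_le1 (s : S) (y : 'I_N) : `|pauli_coef s (ket_bra R y)| <= 1.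
Proof.
rewrite /pauli_coef mxtrace_mulC mxtrace_ket_bra_mul adjE norm_conjC pauliE normr_prod.
by apply: prodr_ile1 => k _; rewrite normr_ge0 norm_pauli1_diag_le1.
Qed.

Fixpoint pauli_path (ph : nat -> S -> S) (t : nat) : S -> S :=
  if t is t'.+1 then ph t \o pauli_path ph t' else id.

Lemma pauli_path_inj (ph : nat -> S -> S) d :
  (forall t, (1 <= t <= d)%N -> injective (ph t)) ->
  forall j, (j <= d)%N -> injective (pauli_path ph j).
Proof.
move=> inj_ph; elim=> [|j IH] j_le /=; first exact: inj_id.
by apply: inj_comp; [apply: inj_ph | apply: IH; apply: ltnW].
Qed.

Lemma clifford_layers_perm (Us : nat -> 'M[C]_N) d :
  (forall t, (1 <= t <= d)%N -> clifford (Us t)) ->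
  exists ph : nat -> S -> S, forall t, (1 <= t <= d)%N -> injective (ph t) /\
    forall s A, `|pauli_coef (ph t s) (uconj (Us t) A)| = `|pauli_coef s A|.
Proof.
move=> cliff_Us.
have layer_perm t : exists ph : S -> S, (1 <= t <= d)%N -> injective ph /\
    forall s A, `|pauli_coef (ph s) (uconj (Us t) A)| = `|pauli_coef s A|.
  have [t_in|_] := boolP (1 <= t <= d)%N; last by exists id.
  by have [ph ph_perm] := clifford_pauli_perm (cliff_Us t t_in); exists ph.
by have [ph hph] := boolp.choice layer_perm; exists ph.
Qed.

Lemma norm_pauli_coef_noisy (g : R) Us d (ph : nat -> S -> S) :
  (forall t, (1 <= t <= d)%N -> forall s A,
     `|pauli_coef (ph t s) (uconj (Us t) A)| = `|pauli_coef s A|) ->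
  forall s A, `|pauli_coef (pauli_path ph d s) (noisy g Us d A)| =
    `|rC (\prod_(j < d.+1) pow_weight (1 - g) (pauli_path ph j s))| * `|pauli_coef s A|.
Proof.
move=> norm_ph; elim: d norm_ph => [|d IH] norm_ph s A /=.
  by rewrite pauli_coef_depol normrM big_ord1.
have norm_ph_le t : (1 <= t <= d)%N -> forall s A,
    `|pauli_coef (ph t s) (uconj (Us t) A)| = `|pauli_coef s A|.
  by case/andP=> t_ge1 t_le; apply: norm_ph; rewrite t_ge1 ltnW.
rewrite pauli_coef_depol normrM norm_ph ?leqnn // [in RHS]big_ord_recr /= !rCE rmorphM normrM.
by rewrite -mulrA mulrCA; congr (_ * _); apply: IH.
Qed.

Lemma sum_sqr_outprob_le (g : R) Us d (U : 'M[C]_N) (y : 'I_N) :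
  (forall t, (1 <= t <= d)%N -> clifford (Us t)) -> unitary U ->
  \sum_x outprob g Us d U y x ^+ 2 <= N%:R^-1 * rC ((1 + ((1 - g) ^+ 2) ^+ d.+1 *+ 3) ^+ n).
Proof.
move=> cliff_Us hU; have [ph hph] := clifford_layers_perm cliff_Us.
pose sig := pauli_path ph.
have inj_sig := pauli_path_inj (fun t t_in => (hph t t_in).1).
have path := norm_pauli_coef_noisy g (fun t t_in => (hph t t_in).2).
under eq_bigr => x _ do rewrite outprobE.
have herm : adj (noisy g Us d (ket_bra R y)) = noisy g Us d (ket_bra R y).
  by rewrite noisy_adj ket_bra_adj.
apply: le_trans (sum_sqr_diag_uconj_le hU herm) _.
rewrite ler_wpM2l ?invr_ge0 ?ler0n // (reindex_inj (inj_sig d (leqnn d))) /=.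
apply: le_trans (_ : \sum_s rC (\prod_(j < d.+1) pow_weight ((1 - g) ^+ 2) (sig j s)) <= _).
  apply: ler_sum => s _; rewrite path exprMn -[X in _ <= X]mulr1.
  rewrite ler_pM ?exprn_ge0 ?exprn_ile1 ?norm_pauli_coef_ket_bra_le1 //.
  rewrite normCK conj_rC -expr2 rCE -rmorphXn -prodrXl.
  by under eq_bigr => j _ do rewrite pow_weightX.
rewrite -(rmorph_sum (real_complex R)) lecR.
exact: sum_prod_pow_weight_le (sqr_ge0 _) inj_sig.
Qed.

End NoisyCircuit.

Theorem theorem5 (R : realType) :
  exists c K : R, 0 < c /\ 0 < K /\
  forall (n : nat) (g : R), (0 < n)%N -> 0 < g -> g <= 1 ->
  forall (d : nat), c * ln (n%:R) / g <= d%:R ->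
  forall (Us : nat -> 'M[complex R]_(2 ^ n)),
    (forall t : nat, (1 <= t <= d)%N -> clifford (Us t)) ->
  forall U : 'M[complex R]_(2 ^ n), unitary U ->
    avg_collision g Us d U <= rC (K / (2 ^ n)%:R).
Proof.
exists 1, (expR 3); split; first exact: ltr01.
split=> [|n g n_gt0 g_gt0 g_le1 d hd Us cliff_Us U hU]; first exact: expR_gt0.
rewrite mul1r in hd.
have decay_ge0 : 0 <= ((1 - g) ^+ 2) ^+ d.+1 by rewrite exprn_ge0 ?sqr_ge0.
have := exprn_1D3x_le_expR3 decay_ge0 (decay_le_invn n_gt0 g_gt0 g_le1 hd).
rewrite -lecR => growth_le.
have per_y (y : 'I_(2 ^ n)) : \sum_x outprob g Us d U y x ^+ 2 <= (2 ^ n)%:R^-1 * rC (expR 3).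
  apply: le_trans (sum_sqr_outprob_le g y cliff_Us hU) _.
  by rewrite ler_wpM2l ?invr_ge0 ?ler0n.
rewrite /avg_collision; apply: le_trans (ler_wpM2l _ (ler_sum _ (fun y _ => per_y y))) _.
  by rewrite invr_ge0 ler0n.
rewrite sumr_const card_ord -[X in _ * X]mulr_natl mulrA mulVf ?dim_neq0 // mul1r.
by rewrite !rCE fmorph_div rmorph_nat mulrC.
Qed.
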